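(* Let $G$ be a finite simple graph, let $v \in V(G)$, and let $G_0$ be a nonempty union of connected components of $G[N(v)]$. If $G_0$ is a weak König–Egerváry graph, then $G$ has a reducible set of edges. Also, if $G[N(v)]$ is a weak König–Egerváry graph, then $\{v\}$ is a reducible set of vertices.
   Context: A graph $H$ is a weak König–Egerváry graph if $H$ has a matching $M$ and a vertex set $Q \subseteq V(H)$ with $|Q| \leq |M|$ such that $Q$ is a vertex cover of $H - M$. For a set $\mathcal{S}$ of triangles, an $\mathcal{S}$-edge is an edge of a triangle in $\mathcal{S}$. A nonempty edge set $E_0 \subseteq E(G)$ is reducible if there exist a set $\mathcal{S}$ of pairwise edge-disjoint triangles and a set $X \subseteq E(G)$ such that (i) $|X| \leq 2|\mathcal{S}|$; (ii) $G - X$ has no triangle containing an edge of $E_0$; (iii) $X$ contains every $\mathcal{S}$-edge not in $E_0$. A nonempty vertex set $V_0 \subseteq V(G)$ is reducible if there exist such $\mathcal{S}$ and $X$ with (i) $|X| \leq 2|\mathcal{S}|$; (ii) $G - X$ has no triangle containing a vertex of $V_0$; (iii) $X$ contains every $\mathcal{S}$-edge whose endpoints both lie outside $V_0$. *)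

(* Finite simple graphs as symmetric irreflexive relations
   on a finType; edges are 2-element vertex sets. *)
From mathcomp Require Import all_boot.
Set Implicit Arguments. Unset Strict Implicit. Unset Printing Implicit Defensive.

Section Graphs.
Variables (T : finType) (e : rel T).

Definition edges : {set {set T}} :=
  [set E : {set T} | [exists x, exists y, e x y && (E == [set x; y])]].

Definition edges_in (A : {set T}) : {set {set T}} :=
  [set E in edges | E \subset A].

Definition nbhd (v : T) : {set T} := [set u | e v u].

Definition matching_in (A : {set T}) (M : {set {set T}}) : Prop :=
  M \subset edges_in A /\
  (forall E1 E2, E1 \in M -> E2 \in M -> E1 != E2 -> [disjoint E1 & E2]).

Definition weakKE (A : {set T}) : Prop :=
  exists (M : {set {set T}}) (Q : {set T}),
    [/\ matching_in A M, Q \subset A, #|Q| <= #|M| &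
        forall E, E \in edges_in A -> E \notin M -> E :&: Q != set0].

Definition triangles : {set {set T}} :=
  [set t : {set T} | [exists a, exists b, exists c,
     [&& e a b, e b c, e a c & t == [set a; b; c]]]].

Definition tri_edges (t : {set T}) : {set {set T}} :=
  [set E in edges | E \subset t].

Definition edge_disjoint_triangles (S : {set {set T}}) : Prop :=
  S \subset triangles /\
  (forall t1 t2, t1 \in S -> t2 \in S -> t1 != t2 ->
     [disjoint tri_edges t1 & tri_edges t2]).

Definition triangle_avoiding (X : {set {set T}}) (t : {set T}) : Prop :=
  t \in triangles /\ [disjoint tri_edges t & X].

Definition reducible_edges (E0 : {set {set T}}) : Prop :=
  [/\ E0 != set0, E0 \subset edges &
   exists (S X : {set {set T}}),
     [/\ edge_disjoint_triangles S, X \subset edges,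
         #|X| <= 2 * #|S|,
         (forall t, triangle_avoiding X t -> [disjoint tri_edges t & E0]) &
         (forall t E, t \in S -> E \in tri_edges t -> E \notin E0 -> E \in X)]].

Definition reducible_vertices (V0 : {set T}) : Prop :=
  V0 != set0 /\
  exists (S X : {set {set T}}),
    [/\ edge_disjoint_triangles S, X \subset edges,
        #|X| <= 2 * #|S|,
        (forall t, triangle_avoiding X t -> [disjoint t & V0]) &
        (forall t E, t \in S -> E \in tri_edges t -> [disjoint E & V0] -> E \in X)].

Definition union_of_components (A C : {set T}) : Prop :=
  [/\ C != set0, C \subset A &
      forall x y, x \in C -> y \in A -> e x y -> y \in C].

End Graphs.

From mathcomp Require Import all_boot.
Set Implicit Arguments. Unset Strict Implicit. Unset Printing Implicit Defensive.

(* Let (M, Q) witness that C is weak Koenig-Egervary, where C is contained in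
   N(v) and closed under adjacency within N(v).  Coning every edge of M from v
   gives |M| edge-disjoint triangles; delete M and the spokes vq, q in Q, which
   is at most 2|M| edges.  If a surviving triangle contained v and some c in C,
   its third vertex w would lie in N(v), hence in C; the edge cw survived, so it
   is not in M and Q covers it, but the spoke at that cover vertex was deleted.
   Hence no surviving triangle through v meets C: the spokes vC are reducible,
   and for C = N(v) so is {v}. *)


Lemma disjointP (T : finType) (A B : {set T}) :
  reflect (forall x, x \in A -> x \in B -> False) [disjoint A & B].
Proof.
rewrite disjoint_subset; apply: (iffP subsetP) => [AB x /AB | AB x xA].
  by rewrite inE => /negP.
by rewrite inE; apply/negP; apply: AB.
Qed.

Section Graph.
Variables (T : finType) (e : rel T).
Hypotheses (sym_e : symmetric e) (irr_e : irreflexive e).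

Lemma adj_neq x y : e x y -> x != y.
Proof. by apply: contraTneq => ->; rewrite irr_e. Qed.

Lemma edges2P F : reflect (exists x y, e x y /\ F = [set x; y]) (F \in edges e).
Proof.
rewrite inE; apply: (iffP existsP) => [[x /existsP[y /andP[exy /eqP->]]] | [x [y [exy ->]]]].
  by exists x, y.
by exists x; apply/existsP; exists y; rewrite exy eqxx.
Qed.

Lemma edges2 x y : e x y -> [set x; y] \in edges e.
Proof. by move=> exy; apply/edges2P; exists x, y. Qed.

Lemma card_edge F : F \in edges e -> #|F| = 2.
Proof. by case/edges2P=> x [y [/adj_neq xy ->]]; rewrite cards2 xy. Qed.

Lemma edge_sub_setU1 v E F : E \in edges e -> F \in edges e -> F \subset v |: E ->
  F = E \/ exists2 c, c \in E & F = [set v; c].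
Proof.
move=> Ee /edges2P[x [y [/adj_neq xy Fxy]]] FvE; subst F.
have inE_neqv z : z \in [set x; y] -> z != v -> z \in E.
  by move=> /(subsetP FvE); rewrite in_setU1 => /orP[/eqP->|]; rewrite ?eqxx.
have [vF|vF] := boolP (v \in [set x; y]).
  right; case/set2P: vF => vxy; rewrite vxy in inE_neqv *.
    by exists y; rewrite // inE_neqv ?set22 // eq_sym.
  by exists x; rewrite 1?setUC // inE_neqv ?set21.
left; apply/eqP; rewrite eqEcard (card_edge Ee) cards2 xy andbT.
by apply/subsetP => z zF; apply: inE_neqv => //; apply: contraNneq vF => <-.
Qed.

Lemma trianglesP t :
  reflect (exists a b c, [/\ e a b, e b c, e a c & t = [set a; b; c]])
          (t \in triangles e).
Proof.
rewrite inE; apply: (iffP existsP) => [[a /existsP[b /existsP[c]]] | [a [b [c]]]].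
  by case/and4P=> eab ebc eac /eqP->; exists a, b, c.
by case=> eab ebc eac ->; exists a; apply/existsP; exists b; apply/existsP; exists c;
  rewrite eab ebc eac eqxx.
Qed.

Lemma triangle_adj t x y : t \in triangles e -> x \in t -> y \in t -> x != y -> e x y.
Proof.
case/trianglesP=> a [b [c [eab ebc eac ->]]].
by rewrite !inE => /orP[/orP[]|]/eqP-> /orP[/orP[]|]/eqP->;
  rewrite ?eqxx // => _; rewrite // sym_e.
Qed.

Lemma card_triangle t : t \in triangles e -> #|t| = 3.
Proof.
case/trianglesP=> a [b [c [/adj_neq ab /adj_neq bc /adj_neq ac ->]]].
by rewrite -setUA cardsU1 cards2 bc !inE negb_or ab ac.
Qed.

Lemma triangle_third t x y : t \in triangles e -> exists z, [/\ z \in t, z != x & z != y].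
Proof.
move=> tT; have : ~~ (t \subset [set x; y]).
  by apply/negP => /subset_leq_card; rewrite card_triangle // cards2; case: (x != y).
by case/subsetPn=> z zt; rewrite !inE negb_or => /andP[zx zy]; exists z.
Qed.

Lemma triangle_nbhd t v : t \in triangles e -> v \in t ->
  exists2 c, c \in t & c \in nbhd e v.
Proof.
move=> tT vt; have [c [ct cv _]] := triangle_third v v tT.
by exists c; rewrite // inE (triangle_adj tT) // eq_sym.
Qed.

Lemma triangle_edge t x y : t \in triangles e -> x \in t -> y \in t -> x != y ->
  [set x; y] \in tri_edges e t.
Proof.
move=> tT xt yt xy; rewrite inE edges2 ?(triangle_adj tT) //=.
by apply/subsetP => z /set2P[]->.
Qed.

Lemma triangle_avoiding_edge X t x y : triangle_avoiding e X t ->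
  x \in t -> y \in t -> x != y -> [set x; y] \notin X.
Proof.
by case=> tT tX xt yt xy; rewrite (disjointFr tX) ?triangle_edge.
Qed.

End Graph.

Definition star (T : finType) (v : T) (A : {set T}) : {set {set T}} :=
  [set [set v; a] | a in A].

Definition cone (T : finType) (v : T) (M : {set {set T}}) : {set {set T}} :=
  [set v |: E | E in M].

Section Construction.
Variables (T : finType) (e : rel T).
Hypotheses (sym_e : symmetric e) (irr_e : irreflexive e).
Variables (v : T) (C : {set T}) (M : {set {set T}}) (Q : {set T}).
Hypotheses (C_nbhd : C \subset nbhd e v)
  (C_closed : forall x y, x \in C -> y \in nbhd e v -> e x y -> y \in C)
  (M_matching : matching_in e C M) (Q_sub : Q \subset C)
  (card_QM : #|Q| <= #|M|)
  (Q_cover : forall E, E \in edges_in e C -> E \notin M -> E :&: Q != set0).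

Let D := M :|: star v Q.

Lemma adj_apex c : c \in C -> e v c.
Proof. by move/(subsetP C_nbhd); rewrite inE. Qed.

Lemma matching_edge E : E \in M -> E \in edges e /\ E \subset C.
Proof. by case: M_matching => /subsetP sub _ /sub; rewrite inE => /andP[]. Qed.

Lemma apex_notin E : E \in M -> v \notin E.
Proof.
by case/matching_edge=> _ /subsetP sub; apply/negP => /sub /adj_apex; rewrite irr_e.
Qed.

Lemma deleted_sub_edges : D \subset edges e.
Proof.
apply/subsetP => F; rewrite inE => /orP[/matching_edge[] // | /imsetP[q qQ ->]].
exact/edges2/adj_apex/(subsetP Q_sub).
Qed.

Lemma card_cone : #|cone v M| = #|M|.
Proof.
apply: card_in_imset => E1 E2 E1M E2M E12.
by rewrite -(setU1K (apex_notin E1M)) E12 setU1K ?apex_notin.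
Qed.

Lemma card_deleted : #|D| <= 2 * #|cone v M|.
Proof.
rewrite card_cone mul2n -addnn (leq_trans (leq_card_setU _ _)) // leq_add2l.
exact: leq_trans (leq_imset_card _ _) card_QM.
Qed.

Lemma cone_triangles : cone v M \subset triangles e.
Proof.
apply/subsetP => _ /imsetP[E EM ->]; have [/edges2P[a [b [eab Eab]]] EC] := matching_edge EM.
have [aC bC] : a \in C /\ b \in C by rewrite !(subsetP EC) // Eab (set21, set22).
by apply/trianglesP; exists v, a, b; rewrite !adj_apex // Eab setUA.
Qed.

Lemma cone_edge_disjoint : edge_disjoint_triangles e (cone v M).
Proof.
split; first exact: cone_triangles.
move=> _ _ /imsetP[E1 E1M ->] /imsetP[E2 E2M ->] t12; apply/disjointP => F.
move=> /setIdP[/edges2P[x [y [/(adj_neq irr_e) xy ->]]] F1] /setIdP[_ F2].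
have E12 : E1 != E2 by apply: contraNneq t12 => ->.
have [z [zF zv]] : exists z, z \in [set x; y] /\ z != v.
  have [xv|] := eqVneq x v; last by exists x; rewrite set21.
  by exists y; rewrite set22 -xv eq_sym.
have inE12 : z \in E1 /\ z \in E2.
  by move: (subsetP F1 z zF) (subsetP F2 z zF); rewrite !in_setU1 (negbTE zv).
by case: M_matching inE12 => _ /(_ _ _ E1M E2M E12)/disjointFr H [/H ->].
Qed.

Lemma cone_tri_edges t : t \in cone v M -> tri_edges e t \subset D :|: star v C.
Proof.
case/imsetP=> E EM ->; have [Ee EC] := matching_edge EM.
apply/subsetP => F /setIdP[Fe FvE].
case: (edge_sub_setU1 irr_e Ee Fe FvE) => [-> | [c cE ->]].
  by rewrite !inE EM.
by apply/setUP; right; apply/imsetP; exists c; rewrite ?(subsetP EC).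
Qed.

Lemma avoiding_apex_disjoint t : triangle_avoiding e D t -> v \in t -> [disjoint t & C].
Proof.
move=> tD vt; have tT := tD.1; apply/disjointP => c ct cC.
have adj x y : x \in t -> y \in t -> x != y -> e x y by exact: triangle_adj.
have avoid x y : x \in t -> y \in t -> x != y -> [set x; y] \notin D.
  exact: triangle_avoiding_edge.
have cv : c != v by rewrite eq_sym (adj_neq irr_e) ?adj_apex.
have [w [wt wv wc]] := triangle_third irr_e c v tT.
have wC : w \in C by rewrite (C_closed cC) ?inE ?adj // eq_sym.
have cwM : [set c; w] \notin M.
  by apply: contraNN (avoid c w ct wt _); rewrite 1?eq_sym // inE => ->.
have /set0Pn[q /setIP[qcw qQ]] : [set c; w] :&: Q != set0.
  apply: Q_cover cwM; apply/setIdP; split; first by rewrite edges2 ?adj 1?eq_sym.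
  by apply/subsetP => z /set2P[]->.
have [qt vq] : q \in t /\ v != q by case/set2P: qcw => ->; rewrite eq_sym.
by case/negP: (avoid v q vt qt vq); apply/setUP; right; apply/imsetP; exists q.
Qed.

End Construction.

Lemma weakKE_triangle_packing (T : finType) (e : rel T) :
  symmetric e -> irreflexive e -> forall (v : T) (C : {set T}),
  C \subset nbhd e v ->
  (forall x y, x \in C -> y \in nbhd e v -> e x y -> y \in C) ->
  weakKE e C ->
  exists S X : {set {set T}},
    [/\ edge_disjoint_triangles e S, X \subset edges e, #|X| <= 2 * #|S|,
        forall t, triangle_avoiding e X t -> v \in t -> [disjoint t & C] &
        forall t, t \in S -> tri_edges e t \subset X :|: star v C].
Proof.
move=> sym_e irr_e v C C_nbhd C_closed [M [Q [M_matching Q_sub card_QM Q_cover]]].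
exists (cone v M), (M :|: star v Q); split.
- exact: cone_edge_disjoint irr_e _ _ _ C_nbhd M_matching.
- exact: deleted_sub_edges C_nbhd M_matching Q_sub.
- exact: card_deleted irr_e _ _ _ _ C_nbhd M_matching card_QM.
- exact: avoiding_apex_disjoint sym_e irr_e _ _ _ _ C_nbhd C_closed Q_cover.
- exact: cone_tri_edges irr_e _ _ _ _ M_matching.
Qed.

Theorem lemma4p4 (T : finType) (e : rel T) (sym_e : symmetric e)
  (irr_e : irreflexive e) (v : T) :
  (forall C : {set T}, union_of_components e (nbhd e v) C -> weakKE e C ->
     exists E0 : {set {set T}}, reducible_edges e E0) /\
  (weakKE e (nbhd e v) -> reducible_vertices e [set v]).
Proof.
split.
- move=> C [C0 C_nbhd C_closed] C_KE.
  have [S [X [S_packing X_edges card_X avoid_C S_edges]]] :=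
    weakKE_triangle_packing sym_e irr_e C_nbhd C_closed C_KE.
  exists (star v C); split.
  + by case/set0Pn: C0 => c cC; apply/set0Pn; exists [set v; c]; apply/imsetP; exists c.
  + apply/subsetP => _ /imsetP[c cC ->]; apply: edges2.
    by move/(subsetP C_nbhd): cC; rewrite inE.
  exists S, X; split => // [t tX | t F tS Ft FE0].
  + apply/disjointP => F /setIdP[_ Ft] /imsetP[c cC Fc]; rewrite {F}Fc in Ft.
    have [vt ct] : v \in t /\ c \in t by rewrite !(subsetP Ft) // (set21, set22).
    by rewrite (disjointFr (avoid_C t tX vt) ct) in cC.
  + by have := subsetP (S_edges t tS) F Ft; rewrite in_setU (negbTE FE0) orbF.
- move=> nbhd_KE.
  have [S [X [S_packing X_edges card_X avoid_nbhd S_edges]]] :=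
    weakKE_triangle_packing sym_e irr_e (subxx _) (fun x y _ yN _ => yN) nbhd_KE.
  split; first by apply/set0Pn; exists v; rewrite set11.
  exists S, X; split => // [t tX | t F tS Ft Fv].
  + apply/disjointP => x xt /set1P xv; rewrite {x}xv in xt.
    have [c ct cN] := triangle_nbhd sym_e irr_e tX.1 xt.
    by rewrite (disjointFr (avoid_nbhd t tX xt) ct) in cN.
  + have := subsetP (S_edges t tS) F Ft; rewrite in_setU => /orP[//| /imsetP[c _ Fc]].
    by rewrite Fc in Fv; move: (disjointFr Fv (set21 v c)); rewrite set11.
Qed.
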